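(* Let $G$ be a global type. The language of the LTS $\mathrm{cat}(G)$ coincides with the language of the LTS on global types, with initial state $G$, whose transitions are those derivable using only the rules [Choice] and [Rec].
   Context: Fix disjoint sets $\mathfrak{P}$ (participants) and $\mathcal{M}$ (messages); interactions are $\mathsf{p}\to\mathsf{q}:\mathsf{m}$ with $\mathsf{p}\neq\mathsf{q}\in\mathfrak{P}$, $\mathsf{m}\in\mathcal{M}$, forming the set $\mathcal{L}_{int}$; $\mathrm{ptp}(\mathsf{p}\to\mathsf{q}:\mathsf{m})=\{\mathsf{p},\mathsf{q}\}$. Global types: $G ::= \mathbf{end} \mid \mu\mathbf{r}.G \mid \mathbf{r} \mid \sum_{i\in I}\mathsf{p}\to\mathsf{q}_i:\mathsf{m}_i;G_i$ (written $\mathsf{p}\to\mathsf{q}:\mathsf{m};G$ when $|I|=1$); $\mu\mathbf{r}$ binds $\mathbf{r}$, occurrences of recursion variables are guarded, and bound variable names are all distinct and distinct from free ones. Operational semantics (LTS with labels in $\mathcal{L}_{int}$): [Choice] $\sum_{i\in I}\mathsf{p}\to\mathsf{q}_i:\mathsf{m}_i;G_i\xrightarrow{\mathsf{p}\to\mathsf{q}_j:\mathsf{m}_j}G_j$ for $j\in I$; [Rec] if $G[\mu\mathbf{r}.G/\mathbf{r}]\xrightarrow{\alpha}G'$ then $\mu\mathbf{r}.G\xrightarrow{\alpha}G'$; [Pass] if $G_j\xrightarrow{\alpha}G'_j$ and $\mathsf{p},\mathsf{q}_j\notin\mathrm{ptp}(\alpha)$ for all $j\in I$, then $\sum_{i\in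 I}\mathsf{p}\to\mathsf{q}_i:\mathsf{m}_i;G_i\xrightarrow{\alpha}\sum_{i\in I}\mathsf{p}\to\mathsf{q}_i:\mathsf{m}_i;G'_i$. $\mathrm{cat}(G)$ is the LTS with the subterms of $G$ as states, initial state $G$, labels $\mathcal{L}_{int}$, and transitions $\mathrm{catr}(G)$, where $\mathrm{catr}(\mathbf{end})=\mathrm{catr}(\mathbf{r})=\emptyset$, $\mathrm{catr}(\mu\mathbf{r}.G)=\mathrm{catr}(G)\cup\{\mathbf{r}\xrightarrow{\varepsilon}\mu\mathbf{r}.G,\ \mu\mathbf{r}.G\xrightarrow{\varepsilon}G\}$, and $\mathrm{catr}(\sum_{i\in I}\mathsf{p}\to\mathsf{q}_i:\mathsf{m}_i;G_i)=\bigcup_{j\in I}(\{\sum_{i\in I}\mathsf{p}\to\mathsf{q}_i:\mathsf{m}_i;G_i\xrightarrow{\mathsf{p}\to\mathsf{q}_j:\mathsf{m}_j}G_j\}\cup\mathrm{catr}(G_j))$. The language of an LTS is the set of traces (concatenations of labels, $\varepsilon$ being the identity) of its finite or infinite runs from the initial state. *)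

From Stdlib Require Import List Arith.
Import ListNotations.

Set Implicit Arguments.

(* A (finite or infinite) word over L: a finite word of length n is
   represented by w with w k = Some _ for k < n and w k = None for k >= n. *)
Definition word (L : Type) := nat -> option L.

Section Languages.
Variables (St L : Type).
Variable step : St -> option L -> St -> Prop.   (* None = epsilon *)

Inductive frun : St -> list (option L) -> Prop :=
| frun_nil  : forall s, frun s []
| frun_cons : forall s a s' ls, step s a s' -> frun s' ls -> frun s (a :: ls).

Fixpoint somes (ls : list (option L)) : list L :=
  match ls with
  | [] => []
  | None :: ls' => somes ls'
  | Some x :: ls' => x :: somes ls'
  end.

Fixpoint count_some (a : nat -> option L) (n : nat) : nat :=
  match n with
  | 0 => 0
  | S n' => count_some a n' + (match a n' with Some _ => 1 | None => 0 end)
  end.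

(* w is the concatenation of the labels of the infinite label sequence a *)
Definition inf_trace (a : nat -> option L) (w : word L) : Prop :=
  forall k x, w k = Some x <-> exists n, a n = Some x /\ count_some a n = k.

Definition lts_lang (init : St) (w : word L) : Prop :=
  (exists ls, frun init ls /\ forall k, w k = nth_error (somes ls) k)
  \/
  (exists (s : nat -> St) (a : nat -> option L),
      s 0 = init /\ (forall n, step (s n) (a n) (s (S n))) /\ inf_trace a w).

End Languages.

Section GlobalTypes.
Variables (P M : Type).   (* participants, messages *)

Inductive gtype : Type :=
| GEnd : gtype
| GVar : nat -> gtype
| GRec : nat -> gtype -> gtype
(* GChoice p [(q_i, m_i, G_i)]_i  =  sum_i p -> q_i : m_i ; G_i *)
| GChoice : P -> list (P * M * gtype) -> gtype.

Definition interaction := (P * P * M)%type.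

(* G[N/r] (naive substitution; capture cannot arise under the standing
   convention that bound names are distinct from each other and from free ones) *)
Fixpoint subst (r : nat) (N : gtype) (G : gtype) : gtype :=
  match G with
  | GEnd => GEnd
  | GVar s => if Nat.eqb s r then N else GVar s
  | GRec s B => if Nat.eqb s r then GRec s B else GRec s (subst r N B)
  | GChoice p bs =>
      GChoice p ((fix substs (bs : list (P * M * gtype)) :=
                    match bs with
                    | [] => []
                    | (q, m, G') :: bs' => (q, m, subst r N G') :: substs bs'
                    end) bs)
  end.

(* bound variables, with multiplicity *)
Fixpoint bv (G : gtype) : list nat :=
  match G with
  | GEnd => []
  | GVar _ => []
  | GRec r B => r :: bv B
  | GChoice _ bs =>
      (fix bvs (bs : list (P * M * gtype)) :=
         match bs with
         | [] => []
         | (_, _, G') :: bs' => bv G' ++ bvs bs'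
         end) bs
  end.

Fixpoint fv (G : gtype) : list nat :=
  match G with
  | GEnd => []
  | GVar r => [r]
  | GRec r B => filter (fun s => negb (Nat.eqb s r)) (fv B)
  | GChoice _ bs =>
      (fix fvs (bs : list (P * M * gtype)) :=
         match bs with
         | [] => []
         | (_, _, G') :: bs' => fv G' ++ fvs bs'
         end) bs
  end.

Inductive subterm : gtype -> gtype -> Prop :=
| sub_refl : forall G, subterm G G
| sub_rec : forall G r B, subterm G B -> subterm G (GRec r B)
| sub_choice : forall G p bs q m G',
    In (q, m, G') bs -> subterm G G' -> subterm G (GChoice p bs).

Fixpoint unguarded_occ (r : nat) (G : gtype) : Prop :=
  match G with
  | GVar s => s = r
  | GRec s B => s <> r /\ unguarded_occ r B
  | _ => False
  end.

(* Standing assumptions on global types: choices have a nonempty index set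
   and p <> q_i (so labels are interactions); occurrences of recursion
   variables are guarded; bound variable names are all distinct and
   distinct from free ones. *)
Definition wf_gtype (G : gtype) : Prop :=
  (forall T, subterm T G ->
     (forall p bs, T = GChoice p bs ->
        bs <> [] /\ forall q m G', In (q, m, G') bs -> p <> q) /\
     (forall r B, T = GRec r B -> ~ unguarded_occ r B))
  /\ NoDup (bv G)
  /\ (forall r, In r (bv G) -> ~ In r (fv G)).

Inductive sem_CR : gtype -> interaction -> gtype -> Prop :=
| CR_choice : forall p bs q m Gj,
    In (q, m, Gj) bs -> sem_CR (GChoice p bs) (p, q, m) Gj
| CR_rec : forall r B a G',
    sem_CR (subst r (GRec r B) B) a G' -> sem_CR (GRec r B) a G'.

Definition sem_CR_step (G : gtype) (l : option interaction) (G' : gtype) : Prop :=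
  match l with
  | Some a => sem_CR G a G'
  | None => False
  end.

Inductive catr : gtype -> gtype -> option interaction -> gtype -> Prop :=
| catr_recin : forall r B s l t, catr B s l t -> catr (GRec r B) s l t
| catr_back : forall r B, catr (GRec r B) (GVar r) None (GRec r B)
| catr_unfold : forall r B, catr (GRec r B) (GRec r B) None B
| catr_choice : forall p bs q m Gj,
    In (q, m, Gj) bs -> catr (GChoice p bs) (GChoice p bs) (Some (p, q, m)) Gj
| catr_choicein : forall p bs q m Gj s l t,
    In (q, m, Gj) bs -> catr Gj s l t -> catr (GChoice p bs) s l t.

Definition cat_step (G : gtype) (s : gtype) (l : option interaction) (t : gtype) : Prop :=
  subterm s G /\ subterm t G /\ catr G s l t.

End GlobalTypes.

Arguments GEnd {P M}.
Arguments GVar {P M} _.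

(* A state c of cat(G) is a subterm of G.  It stands for the global type obtained
   by instantiating every free recursion variable r of c by the type that r has
   been unfolded to; that type is itself the instantiation of the unique binder
   mu r.B of G (bound names are distinct), which is what makes the back edge
   r --> mu r.B of cat(G) land on the right state.  Under this correspondence a
   labelled transition of cat(G) is a [Choice] step, and an epsilon-transition
   either keeps the global type or replaces it by its [Rec]-unfolding, which has
   the same transitions.  Conversely a derivation by [Choice] and [Rec] is a
   [Choice] step after finitely many unfoldings, each of which cat(G) performs by
   epsilon-moves.  The two inclusions of languages then follow from three facts
   about runs: lockstep simulations, removing stuttering steps, and expanding weak
   steps into their silent prefixes all preserve traces; for infinite runs this
   reindexes the run along an enumeration of its relevant positions. *)

From Stdlib Require Import List Arith Lia Classical ClassicalEpsilon FunctionalExtensionality.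
Import ListNotations.

Section Subsequences.
Implicit Types (h : nat -> nat).

Lemma stable_on_interval {X : Type} (g : nat -> X) m n :
  m <= n -> (forall i, m <= i < n -> g (S i) = g i) -> g n = g m.
Proof.
  induction 1 as [|n Hmn IH]; intros Hstable; [reflexivity|].
  rewrite Hstable by lia. apply IH. intros i Hi. apply Hstable. lia.
Qed.

Lemma increasing_le h : (forall j, h j < h (S j)) -> forall i j, i <= j -> h i <= h j.
Proof.
  intros Hinc i j Hij. induction Hij as [|j _ IH]; [reflexivity|].
  specialize (Hinc j). lia.
Qed.

Lemma increasing_gap h n : (forall j, h j < h (S j)) ->
  n < h 0 \/ (exists j, h j < n < h (S j)) -> forall j, h j <> n.
Proof.
  intros Hinc [Hn | (i & Hi)] j <-.
  - pose proof (increasing_le h Hinc _ _ (Nat.le_0_l j)). lia.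
  - destruct (Nat.le_gt_cases j i) as [Hji | Hij].
    + pose proof (increasing_le h Hinc _ _ Hji). lia.
    + pose proof (increasing_le h Hinc _ _ Hij). lia.
Qed.

Lemma stable_off_subseq {X : Type} (g : nat -> X) h :
  (forall j, h j < h (S j)) -> (forall n, (forall j, h j <> n) -> g (S n) = g n) ->
  g (h 0) = g 0 /\ forall j, g (h (S j)) = g (S (h j)).
Proof.
  intros Hinc Hoff. split.
  - apply stable_on_interval; [lia|]. intros i Hi.
    apply Hoff, increasing_gap; [exact Hinc|]. left; lia.
  - intros j. apply stable_on_interval; [apply Hinc|]. intros i Hi.
    apply Hoff, increasing_gap; [exact Hinc|]. right; exists j; lia.
Qed.

Lemma enumerate_infinite (P : nat -> Prop) : (forall m, exists n, m <= n /\ P n) ->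
  exists h, (forall j, h j < h (S j)) /\ (forall j, P (h j)) /\
            (forall n, P n -> exists j, h j = n).
Proof.
  intros Hinf.
  assert (Hleast : forall m, exists n, (m <= n /\ P n) /\ forall i, m <= i -> P i -> n <= i).
  { intros m.
    destruct (dec_inh_nat_subset_has_unique_least_element (fun n => m <= n /\ P n))
      as (n & [Hn Hmin] & _); [intros n; apply classic | apply Hinf |].
    exists n. split; [exact Hn|]. intros i Hmi Hi. apply Hmin. auto. }
  destruct (choice _ Hleast) as [next Hnext].
  pose (h := fix h j := match j with 0 => next 0 | S j => next (S (h j)) end).
  assert (Hh0 : h 0 = next 0) by reflexivity.
  assert (HhS : forall j, h (S j) = next (S (h j))) by reflexivity.
  clearbody h.
  assert (Hinc : forall j, h j < h (S j)).
  { intros j. rewrite HhS. destruct (Hnext (S (h j))) as [[? _] _]. lia. }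
  exists h. split; [exact Hinc|]. split.
  - intros [|j]; [rewrite Hh0 | rewrite HhS]; apply Hnext.
  - assert (Hbelow : forall j n, n <= h j -> P n -> exists j', h j' = n).
    { induction j as [|j IH]; intros n Hn HPn.
      - exists 0. rewrite Hh0 in *. destruct (Hnext 0) as [_ Hmin].
        specialize (Hmin n (Nat.le_0_l n) HPn). lia.
      - destruct (Nat.le_gt_cases n (h j)) as [Hle | Hgt]; [exact (IH n Hle HPn)|].
        exists (S j). rewrite HhS in *. destruct (Hnext (S (h j))) as [_ Hmin].
        specialize (Hmin n Hgt HPn). lia. }
    assert (Hge : forall j, j <= h j).
    { induction j as [|j IH]; [lia|]. specialize (Hinc j). lia. }
    intros n HPn. exact (Hbelow n n (Hge n) HPn).
Qed.

End Subsequences.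

Lemma dependent_choice {X : Type} (Inv : nat -> X -> Prop) (E : nat -> X -> X -> Prop) x0 :
  Inv 0 x0 -> (forall n x, Inv n x -> exists y, E n x y /\ Inv (S n) y) ->
  exists f, f 0 = x0 /\ forall n, Inv n (f n) /\ E n (f n) (f (S n)).
Proof.
  intros H0 Hnext.
  assert (Htot : forall nx : nat * X, exists y,
    Inv (fst nx) (snd nx) -> E (fst nx) (snd nx) y /\ Inv (S (fst nx)) y).
  { intros [n x]. destruct (classic (Inv n x)) as [Hx | Hx].
    - destruct (Hnext n x Hx) as [y Hy]. exists y. auto.
    - exists x. contradiction. }
  destruct (choice _ Htot) as [F HF].
  pose (f := fix f n := match n with 0 => x0 | S n => F (n, f n) end).
  assert (Hf : forall n, Inv n (f n)).
  { induction n as [|n IH]; [exact H0|]. apply (HF (n, f n)), IH. }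
  exists f. split; [reflexivity|]. intros n. split; [apply Hf|]. apply (HF (n, f n)), Hf.
Qed.

Section LabelSequences.
Context {L : Type}.
Implicit Types (a b : nat -> option L) (w : word L) (h : nat -> nat).

Lemma count_some_subseq a b h :
  (forall j, h j < h (S j)) -> (forall n, (forall j, h j <> n) -> a n = None) ->
  (forall j, a (h j) = b j) -> forall j, count_some a (h j) = count_some b j.
Proof.
  intros Hinc Hoff Hab.
  destruct (stable_off_subseq (count_some a) h Hinc) as [H0 HS].
  { intros n Hn. cbn [count_some]. rewrite (Hoff n Hn). lia. }
  induction j as [|j IH]; [exact H0|].
  rewrite HS. cbn [count_some]. rewrite IH, Hab. reflexivity.
Qed.

Lemma inf_trace_subseq a b h w :
  (forall j, h j < h (S j)) -> (forall n, (forall j, h j <> n) -> a n = None) ->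
  (forall j, a (h j) = b j) -> inf_trace a w <-> inf_trace b w.
Proof.
  intros Hinc Hoff Hab.
  pose proof (count_some_subseq a b h Hinc Hoff Hab) as Hcount.
  assert (Hsame : forall k x, (exists n, a n = Some x /\ count_some a n = k) <->
                              (exists j, b j = Some x /\ count_some b j = k)).
  { intros k x. split.
    - intros (n & Hn & Hc).
      assert (Hon : exists j, h j = n).
      { apply NNPP. intros Hnot. rewrite Hoff in Hn; [discriminate|].
        intros j Hj. apply Hnot. eauto. }
      destruct Hon as [j <-]. exists j. rewrite <- Hab, <- Hcount. auto.
    - intros (j & Hj & Hc). exists (h j). rewrite Hab, Hcount. auto. }
  unfold inf_trace. split; intros Htr k x; rewrite Htr; [|symmetry]; apply Hsame.
Qed.

Lemma count_some_shift a n :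
  count_some a (S n) =
  match a 0 with Some _ => 1 | None => 0 end + count_some (fun i => a (S i)) n.
Proof.
  induction n as [|n IH]; [simpl; lia|].
  change (count_some a (S (S n))) with
    (count_some a (S n) + match a (S n) with Some _ => 1 | None => 0 end).
  rewrite IH. simpl. lia.
Qed.

Lemma inf_trace_tail_silent a w :
  a 0 = None -> inf_trace a w -> inf_trace (fun n => a (S n)) w.
Proof.
  intros H0 Htr k x. rewrite (Htr k x). split.
  - intros ([|n] & Hn & Hc); [congruence|].
    exists n. rewrite count_some_shift, H0 in Hc. auto.
  - intros (n & Hn & Hc). exists (S n). rewrite count_some_shift, H0. auto.
Qed.

Lemma inf_trace_tail_label a w x : a 0 = Some x -> inf_trace a w ->
  w 0 = Some x /\ inf_trace (fun n => a (S n)) (fun k => w (S k)).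
Proof.
  intros H0 Htr. split; [apply Htr; exists 0; auto|].
  intros k y. rewrite (Htr (S k) y). split.
  - intros ([|n] & Hn & Hc); [discriminate|].
    exists n. rewrite count_some_shift, H0 in Hc. split; [exact Hn | simpl in Hc; lia].
  - intros (n & Hn & Hc). exists (S n). rewrite count_some_shift, H0. simpl. auto.
Qed.

Lemma inf_trace_silent_after a w N : inf_trace a w -> (forall n, N <= n -> a n = None) ->
  forall k, w k = nth_error (somes (map a (seq 0 N))) k.
Proof.
  revert a w. induction N as [|N IH]; intros a w Htr Hsilent k.
  - destruct (w k) as [x|] eqn:Hw; [|destruct k; reflexivity].
    apply Htr in Hw as (n & Hn & _). rewrite Hsilent in Hn by lia. discriminate.
  - assert (Hsilent' : forall n, N <= n -> a (S n) = None) by (intros; apply Hsilent; lia).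
    cbn [seq map]. rewrite <- seq_shift, map_map.
    destruct (a 0) as [x|] eqn:H0.
    + destruct (inf_trace_tail_label a w x H0 Htr) as [Hw0 Htr'].
      destruct k as [|k]; [exact Hw0|]. exact (IH _ _ Htr' Hsilent' k).
    + exact (IH _ _ (inf_trace_tail_silent a w H0 Htr) Hsilent' k).
Qed.

End LabelSequences.

Section Runs.
Context {L : Type}.

Lemma frun_of_run {St : Type} (step : St -> option L -> St -> Prop) s a :
  (forall n, step (s n) (a n) (s (S n))) -> forall N i, frun step (s i) (map a (seq i N)).
Proof. intros Hrun N. induction N as [|N IH]; intros i; econstructor; eauto. Qed.

Section Simulation.
Context {St1 St2 : Type}.
Variables (step1 : St1 -> option L -> St1 -> Prop) (step2 : St2 -> option L -> St2 -> Prop).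
Variable R : St1 -> St2 -> Prop.
Hypothesis R_sim : forall s1 s2 l t1, R s1 s2 -> step1 s1 l t1 ->
  exists t2, step2 s2 l t2 /\ R t1 t2.

Lemma frun_sim s1 s2 ls : R s1 s2 -> frun step1 s1 ls -> frun step2 s2 ls.
Proof.
  intros HR Hrun. revert s2 HR.
  induction Hrun as [s|s l t ls Hst _ IH]; intros s2 HR; [constructor|].
  destruct (R_sim _ _ _ _ HR Hst) as (t2 & Hst2 & HR'). econstructor; eauto.
Qed.

Lemma lts_lang_sim s1 s2 w : R s1 s2 -> lts_lang step1 s1 w -> lts_lang step2 s2 w.
Proof.
  intros HR [(ls & Hrun & Hw) | (s & a & Hs0 & Hrun & Htr)].
  - left. exists ls. split; [exact (frun_sim _ _ _ HR Hrun) | exact Hw].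
  - destruct (dependent_choice (fun n t => R (s n) t) (fun n t t' => step2 t (a n) t') s2)
      as (t & Ht0 & Ht).
    + rewrite Hs0. exact HR.
    + intros n t HRn. destruct (R_sim _ _ _ _ HRn (Hrun n)) as (t' & ? & ?). eauto.
    + right. exists t, a. split; [exact Ht0|]. split; [apply Ht | exact Htr].
Qed.

End Simulation.

Section Stuttering.
Context {St : Type}.
Variable step : St -> option L -> St -> Prop.

Definition stutter_step s l t := step s l t \/ (l = None /\ t = s).

Lemma frun_unstutter s ls : frun stutter_step s ls ->
  exists ls', frun step s ls' /\ somes ls' = somes ls.
Proof.
  induction 1 as [s|s l t ls [Hst | [-> ->]] _ (ls' & Hrun & Hsomes)].
  - exists []. split; [constructor | reflexivity].
  - exists (l :: ls'). split; [econstructor; eauto|]. destruct l; simpl; congruence.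
  - exists ls'. auto.
Qed.

Lemma lts_lang_unstutter s0 w : lts_lang stutter_step s0 w -> lts_lang step s0 w.
Proof.
  intros [(ls & Hrun & Hw) | (s & a & Hs0 & Hrun & Htr)].
  - destruct (frun_unstutter _ _ Hrun) as (ls' & Hrun' & Hsomes).
    left. exists ls'. split; [exact Hrun'|]. intros k. rewrite Hsomes. apply Hw.
  - pose (moves n := ~ (a n = None /\ s (S n) = s n)).
    destruct (classic (forall m, exists n, m <= n /\ moves n)) as [Hinf | Hfin].
    + destruct (enumerate_infinite _ Hinf) as (h & Hinc & Hmoves & Hall).
      assert (Hoff : forall n, (forall j, h j <> n) -> a n = None /\ s (S n) = s n).
      { intros n Hn. apply NNPP. intros Hm. destruct (Hall n Hm) as [j Hj]. exact (Hn j Hj). }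
      destruct (stable_off_subseq s h Hinc) as [Hs_h0 Hs_hS]; [intros n Hn; apply Hoff, Hn|].
      right. exists (fun j => s (h j)), (fun j => a (h j)). split; [|split].
      * rewrite Hs_h0. exact Hs0.
      * intros j. rewrite Hs_hS.
        destruct (Hrun (h j)) as [Hst | Hstutter]; [exact Hst | destruct (Hmoves j Hstutter)].
      * refine (proj1 (inf_trace_subseq a _ h w Hinc _ _) Htr); [|reflexivity].
        intros n Hn. apply Hoff, Hn.
    + apply not_all_ex_not in Hfin as [N HN].
      assert (Hsilent : forall n, N <= n -> a n = None).
      { intros n Hn. destruct (a n) as [x|] eqn:Ha; [|reflexivity].
        exfalso. apply HN. exists n. split; [exact Hn|]. intros [Hnone _]. congruence. }
      destruct (frun_unstutter _ _ (frun_of_run _ s a Hrun N 0)) as (ls' & Hrun' & Hsomes).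
      left. exists ls'. split; [rewrite <- Hs0; exact Hrun'|].
      intros k. rewrite Hsomes. exact (inf_trace_silent_after a w N Htr Hsilent k).
Qed.

End Stuttering.

Section Saturation.
Context {St : Type}.
Variable step : St -> option L -> St -> Prop.

Inductive silent_steps : nat -> St -> St -> Prop :=
| silent_steps_0 s : silent_steps 0 s s
| silent_steps_S n s t u : step s None t -> silent_steps n t u -> silent_steps (S n) s u.

Definition weak_step s l t := exists n u, silent_steps n s u /\ step u l t.

Lemma weak_step_silent s t u l : step s None t -> weak_step t l u -> weak_step s l u.
Proof.
  intros Hst (n & v & Hsil & Hv). exists (S n), v. split; [econstructor; eauto | exact Hv].
Qed.

Lemma frun_silent_steps n s u ls :
  silent_steps n s u -> frun step u ls -> frun step s (repeat None n ++ ls).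
Proof. induction 1; simpl; [auto|]. intros; econstructor; eauto. Qed.

Lemma somes_repeat_None n (ls : list (option L)) : somes (repeat None n ++ ls) = somes ls.
Proof. induction n; simpl; auto. Qed.

Lemma frun_unsaturate s ls : frun weak_step s ls ->
  exists ls', frun step s ls' /\ somes ls' = somes ls.
Proof.
  induction 1 as [s|s l t ls (n & u & Hsil & Hst) _ (ls' & Hrun & Hsomes)].
  - exists []. split; [constructor | reflexivity].
  - exists (repeat None n ++ l :: ls'). split.
    + eapply frun_silent_steps; [exact Hsil|]. econstructor; eauto.
    + rewrite somes_repeat_None. destruct l; simpl; congruence.
Qed.

(* A position of the run obtained by expanding a run of weak steps: the current
   state, the number of weak steps already completed, and the number of silent
   steps left before the visible step that completes the next one. *)
Record flat_position := FlatPos { fp_state : St; fp_index : nat; fp_delay : nat }.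

Definition flat_label (a : nat -> option L) (p : flat_position) : option L :=
  match fp_delay p with 0 => a (fp_index p) | S _ => None end.

Definition flat_advance (a : nat -> option L) (p q : flat_position) : Prop :=
  step (fp_state p) (flat_label a p) (fp_state q) /\
  match fp_delay p with
  | 0 => fp_index q = S (fp_index p)
  | S d => fp_index q = fp_index p /\ fp_delay q = d
  end.

Lemma flat_run_exists (b : nat -> St) (a : nat -> option L) :
  (forall k, weak_step (b k) (a k) (b (S k))) ->
  exists f, fp_state (f 0) = b 0 /\ fp_index (f 0) = 0 /\
            forall N, flat_advance a (f N) (f (S N)).
Proof.
  intros Hweak.
  destruct (choice (fun k n => exists u, silent_steps n (b k) u /\ step u (a k) (b (S k))) Hweak)
    as [delay Hdelay].
  pose (pending p := exists u, silent_steps (fp_delay p) (fp_state p) u /\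
                               step u (a (fp_index p)) (b (S (fp_index p)))).
  destruct (dependent_choice (fun _ => pending) (fun _ => flat_advance a)
              (FlatPos (b 0) 0 (delay 0))) as (f & Hf0 & Hf).
  - exact (Hdelay 0).
  - intros _ [s k [|d]] (u & Hsil & Hst); simpl in Hsil, Hst.
    + inversion Hsil; subst. exists (FlatPos (b (S k)) (S k) (delay (S k))).
      split; [split; [exact Hst | reflexivity] | exact (Hdelay (S k))].
    + inversion Hsil as [|? ? t ? Hst1 Hsil']; subst.
      exists (FlatPos t k d). split; [split; [exact Hst1 | simpl; auto] | exists u; auto].
  - exists f. rewrite Hf0. split; [reflexivity | split; [reflexivity | apply Hf]].
Qed.

Lemma flat_run_fires a f : (forall N, flat_advance a (f N) (f (S N))) ->
  forall m, exists N, m <= N /\ fp_delay (f N) = 0.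
Proof.
  intros Hf m. remember (fp_delay (f m)) as d eqn:Hd. revert m Hd.
  induction d as [|d IH]; intros m Hd; [exists m; auto|].
  destruct (Hf m) as [_ Hadv]. rewrite <- Hd in Hadv. destruct Hadv as [_ Hd'].
  destruct (IH (S m)) as (N & HN & HN0); [auto|]. exists N. split; [lia | exact HN0].
Qed.

Lemma flatten_weak_run (b : nat -> St) (a : nat -> option L) :
  (forall k, weak_step (b k) (a k) (b (S k))) ->
  exists (s : nat -> St) (c : nat -> option L) (h : nat -> nat),
    s 0 = b 0 /\ (forall N, step (s N) (c N) (s (S N))) /\
    (forall j, h j < h (S j)) /\ (forall N, (forall j, h j <> N) -> c N = None) /\
    (forall j, c (h j) = a j).
Proof.
  intros Hweak. destruct (flat_run_exists b a Hweak) as (f & Hs0 & Hk0 & Hf).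
  destruct (enumerate_infinite _ (flat_run_fires a f Hf)) as (h & Hinc & Hfire & Hall).
  assert (Hoff : forall N, (forall j, h j <> N) -> exists d, fp_delay (f N) = S d).
  { intros N HN. destruct (fp_delay (f N)) as [|d] eqn:Hd; [|eauto].
    destruct (Hall N Hd) as [j Hj]. contradiction (HN j Hj). }
  destruct (stable_off_subseq (fun N => fp_index (f N)) h Hinc) as [Hk_h0 Hk_hS].
  { intros N HN. destruct (Hoff N HN) as [d Hd]. destruct (Hf N) as [_ Hadv].
    rewrite Hd in Hadv. apply Hadv. }
  assert (Hindex : forall j, fp_index (f (h j)) = j).
  { induction j as [|j IH]; [congruence|].
    rewrite Hk_hS. destruct (Hf (h j)) as [_ Hadv]. rewrite Hfire in Hadv. congruence. }
  exists (fun N => fp_state (f N)), (fun N => flat_label a (f N)), h.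
  split; [exact Hs0|]. split; [intros N; apply Hf|]. split; [exact Hinc|]. split.
  - intros N HN. unfold flat_label. destruct (Hoff N HN) as [d ->]. reflexivity.
  - intros j. unfold flat_label. rewrite Hfire, Hindex. reflexivity.
Qed.

Lemma lts_lang_unsaturate s0 w : lts_lang weak_step s0 w -> lts_lang step s0 w.
Proof.
  intros [(ls & Hrun & Hw) | (b & a & Hb0 & Hrun & Htr)].
  - destruct (frun_unsaturate _ _ Hrun) as (ls' & Hrun' & Hsomes).
    left. exists ls'. split; [exact Hrun'|]. intros k. rewrite Hsomes. apply Hw.
  - destruct (flatten_weak_run b a Hrun) as (s & c & h & Hs0 & Hrun' & Hinc & Hoff & Hca).
    right. exists s, c. split; [congruence|]. split; [exact Hrun'|].
    exact (proj2 (inf_trace_subseq c a h w Hinc Hoff Hca) Htr).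
Qed.

End Saturation.
End Runs.

Lemma NoDup_app_disjoint {A : Type} (l1 l2 : list A) x :
  NoDup (l1 ++ l2) -> In x l1 -> In x l2 -> False.
Proof.
  induction l1 as [|y l1 IH]; simpl; [tauto|].
  intros Hnd [<- | Hx] Hx2; apply NoDup_cons_iff in Hnd as [Hy Hnd].
  - apply Hy, in_or_app. auto.
  - exact (IH Hnd Hx Hx2).
Qed.

Lemma NoDup_flat_map_in {A B : Type} (f : A -> list B) l x :
  NoDup (flat_map f l) -> In x l -> NoDup (f x).
Proof.
  induction l as [|y l IH]; simpl; [tauto|].
  intros Hnd [<- | Hx].
  - exact (NoDup_app_remove_r _ _ Hnd).
  - exact (IH (NoDup_app_remove_l _ _ Hnd) Hx).
Qed.

Lemma NoDup_flat_map_shared {A B : Type} (f : A -> list B) l x y z :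
  NoDup (flat_map f l) -> In x l -> In y l -> In z (f x) -> In z (f y) -> x = y.
Proof.
  induction l as [|u l IH]; simpl; [tauto|].
  intros Hnd Hx Hy Hzx Hzy.
  assert (Hout : forall v, In v l -> In z (f v) -> In z (f u) -> False).
  { intros v Hv Hzv Hzu. apply (NoDup_app_disjoint _ _ z Hnd Hzu).
    apply in_flat_map. eauto. }
  destruct Hx as [<- | Hx], Hy as [<- | Hy].
  - reflexivity.
  - exfalso. exact (Hout y Hy Hzy Hzx).
  - exfalso. exact (Hout x Hx Hzx Hzy).
  - exact (IH (NoDup_app_remove_l _ _ Hnd) Hx Hy Hzx Hzy).
Qed.

Section GlobalTypes.
Context {P M : Type}.
Notation gt := (gtype P M).
Notation branches := (list (P * M * gt)).

Lemma gtype_ind' (Pg : gt -> Prop) :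
  Pg GEnd -> (forall r, Pg (GVar r)) -> (forall r B, Pg B -> Pg (GRec r B)) ->
  (forall p bs, (forall b, In b bs -> Pg (snd b)) -> Pg (GChoice p bs)) ->
  forall G, Pg G.
Proof.
  intros Hend Hvar Hrec Hchoice. fix IH 1. intros [| r | r B | p bs].
  - exact Hend.
  - apply Hvar.
  - apply Hrec, IH.
  - apply Hchoice. induction bs as [|b bs IHbs]; intros b' Hin; [destruct Hin|].
    destruct Hin as [<- | Hin]; [apply IH | exact (IHbs b' Hin)].
Qed.

Lemma subst_choice r (N : gt) p (bs : branches) :
  subst r N (GChoice p bs) = GChoice p (map (fun b => (fst b, subst r N (snd b))) bs).
Proof. simpl. f_equal. induction bs as [|[[q m] X] bs IH]; simpl; congruence. Qed.

Lemma fv_choice p (bs : branches) : fv (GChoice p bs) = flat_map (fun b => fv (snd b)) bs.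
Proof. simpl. induction bs as [|[[q m] X] bs IH]; simpl; congruence. Qed.

Lemma bv_choice p (bs : branches) : bv (GChoice p bs) = flat_map (fun b => bv (snd b)) bs.
Proof. simpl. induction bs as [|[[q m] X] bs IH]; simpl; congruence. Qed.

Lemma in_fv_rec v r (B : gt) : In v (fv (GRec r B)) <-> In v (fv B) /\ v <> r.
Proof. simpl. rewrite filter_In, Bool.negb_true_iff, Nat.eqb_neq. reflexivity. Qed.

Lemma subst_not_free r (T X : gt) : ~ In r (fv X) -> subst r T X = X.
Proof.
  induction X as [| v | v B IH | p bs IH] using gtype_ind'; intros Hr.
  - reflexivity.
  - simpl in *. destruct (Nat.eqb_spec v r); [tauto | reflexivity].
  - simpl. destruct (Nat.eqb_spec v r); [reflexivity|].
    f_equal. apply IH. intros HrB. apply Hr, in_fv_rec. auto.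
  - rewrite subst_choice. f_equal. rewrite <- map_id. apply map_ext_in.
    intros [qm X] Hb. simpl. f_equal. apply (IH _ Hb). intros HrX.
    apply Hr. rewrite fv_choice. apply in_flat_map. eauto.
Qed.

Lemma sem_CR_unfold r (B : gt) x T :
  sem_CR (GRec r B) x T <-> sem_CR (subst r (GRec r B) B) x T.
Proof. split; [inversion 1; assumption | apply CR_rec]. Qed.

Lemma subterm_trans (X Y Z : gt) : subterm X Y -> subterm Y Z -> subterm X Z.
Proof. intros HXY HYZ. induction HYZ; [exact HXY | constructor; auto | econstructor; eauto]. Qed.

Lemma subterm_rec_bv r (B X : gt) : subterm (GRec r B) X -> In r (bv X).
Proof.
  intros Hsub. remember (GRec r B) as Y eqn:HY. induction Hsub; subst.
  - simpl. auto.
  - simpl. auto.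
  - rewrite bv_choice. apply in_flat_map. eexists; split; [eassumption | auto].
Qed.

Lemma rec_binder_unique r (B1 B2 X : gt) :
  NoDup (bv X) -> subterm (GRec r B1) X -> subterm (GRec r B2) X -> B1 = B2.
Proof.
  intros Hnd H1. revert B2. remember (GRec r B1) as Y eqn:HY.
  induction H1 as [| Y s B H1 IH | Y p bs q m X HX H1 IH]; intros B2 H2; subst.
  - inversion H2 as [| ? ? ? H2' | ]; subst; [reflexivity|].
    apply subterm_rec_bv in H2'. inversion Hnd; contradiction.
  - inversion H2 as [| ? ? ? H2' | ]; subst.
    + apply subterm_rec_bv in H1. inversion Hnd; contradiction.
    + apply IH; auto. inversion Hnd; assumption.
  - inversion H2 as [| | ? ? ? q' m' X' HX' H2']; subst. rewrite bv_choice in Hnd.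
    assert (HXX' : (q, m, X) = (q', m', X')).
    { apply (NoDup_flat_map_shared _ _ _ _ r Hnd HX HX'); eapply subterm_rec_bv; eauto. }
    injection HXX' as <- <- <-. apply IH; auto.
    exact (NoDup_flat_map_in _ _ _ Hnd HX).
Qed.

Lemma catr_subterm (X Y : gt) s l t : subterm X Y -> catr X s l t -> catr Y s l t.
Proof. induction 1; intros; [assumption | apply catr_recin | eapply catr_choicein]; eauto. Qed.

Lemma catr_cases (X : gt) s l t : catr X s l t ->
  (exists r B, s = GVar r /\ l = None /\ t = GRec r B /\ subterm (GRec r B) X) \/
  (exists r B, s = GRec r B /\ l = None /\ t = B) \/
  (exists p bs q m, s = GChoice p bs /\ l = Some (p, q, m) /\ In (q, m, t) bs).
Proof.
  induction 1 as [r B s l t _ IH | r B | r B | p bs q m X Hin | p bs q m X s l t Hin _ IH].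
  - destruct IH as [(r' & B' & -> & -> & -> & Hsub) | IH]; [left | right; exact IH].
    exists r', B'. repeat split. constructor; exact Hsub.
  - left. exists r, B. repeat split. constructor.
  - right; left. eauto.
  - right; right. eauto 7.
  - destruct IH as [(r' & B' & -> & -> & -> & Hsub) | IH]; [left | right; exact IH].
    exists r', B'. repeat split. econstructor; eauto.
Qed.

Definition env := nat -> option gt.
Definition env_del (e : env) r : env := fun v => if Nat.eqb v r then None else e v.
Definition env_set (e : env) r T : env := fun v => if Nat.eqb v r then Some T else e v.

Lemma env_set_del e r T : env_set (env_del e r) r T = env_set e r T.
Proof.
  apply functional_extensionality. intros v. unfold env_set, env_del.
  destruct (v =? r); reflexivity.
Qed.

Lemma env_del_set e r T : env_del (env_set e r T) r = env_del e r.
Proof.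
  apply functional_extensionality. intros v. unfold env_set, env_del.
  destruct (v =? r); reflexivity.
Qed.

Lemma env_set_del_comm e r v T : v <> r -> env_set (env_del e v) r T = env_del (env_set e r T) v.
Proof.
  intros Hvr. apply functional_extensionality. intros u. unfold env_set, env_del.
  destruct (Nat.eqb_spec u r), (Nat.eqb_spec u v); congruence.
Qed.

(* Simultaneous instantiation of the free variables of X, without renaming: the
   environments below only hold types with no free variable bound in G, so no
   capture can occur. *)
Fixpoint inst (e : env) (X : gt) : gt :=
  match X with
  | GEnd => GEnd
  | GVar r => match e r with Some N => N | None => GVar r end
  | GRec r B => GRec r (inst (env_del e r) B)
  | GChoice p bs => GChoice p (map (fun b => (fst b, inst e (snd b))) bs)
  end.

Lemma inst_empty (X : gt) : inst (fun _ => None) X = X.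
Proof.
  induction X as [| r | r B IH | p bs IH] using gtype_ind'; simpl.
  - reflexivity.
  - reflexivity.
  - f_equal. rewrite <- IH at 2. f_equal.
    apply functional_extensionality. intros v. unfold env_del. destruct (v =? r); reflexivity.
  - f_equal. rewrite <- map_id. apply map_ext_in.
    intros [qm X] Hb. simpl. f_equal. exact (IH _ Hb).
Qed.

Lemma inst_subst r (T : gt) e (B : gt) :
  e r = None -> (forall v N, e v = Some N -> ~ In r (fv N)) ->
  subst r T (inst e B) = inst (env_set e r T) B.
Proof.
  revert e. induction B as [| v | v B IH | p bs IH] using gtype_ind'; intros e Her Hclosed.
  - reflexivity.
  - simpl. unfold env_set. destruct (Nat.eqb_spec v r) as [-> | Hvr].
    + rewrite Her. simpl. rewrite Nat.eqb_refl. reflexivity.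
    + destruct (e v) as [N|] eqn:Hev.
      * exact (subst_not_free r T N (Hclosed v N Hev)).
      * simpl. destruct (Nat.eqb_spec v r); [contradiction | reflexivity].
  - simpl. destruct (Nat.eqb_spec v r) as [-> | Hvr].
    + rewrite env_del_set. reflexivity.
    + f_equal. rewrite <- env_set_del_comm by exact Hvr. apply IH.
      * unfold env_del. destruct (Nat.eqb_spec r v); [congruence | exact Her].
      * intros u N. unfold env_del. destruct (u =? v); [discriminate | apply Hclosed].
  - simpl inst. rewrite subst_choice, map_map. f_equal. apply map_ext_in.
    intros [qm X] Hb. simpl. f_equal. exact (IH _ Hb e Her Hclosed).
Qed.

Lemma inst_fv e (X : gt) s : In s (fv (inst e X)) ->
  (In s (fv X) /\ e s = None) \/ (exists v N, e v = Some N /\ In s (fv N)).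
Proof.
  revert e. induction X as [| v | v B IH | p bs IH] using gtype_ind'; intros e Hs.
  - contradiction.
  - simpl in Hs. destruct (e v) as [N|] eqn:Hev; [right; eauto|].
    destruct Hs as [<- | []]. left. simpl. auto.
  - simpl inst in Hs. apply in_fv_rec in Hs as [Hs Hsv].
    destruct (IH _ Hs) as [[HsB Hdel] | (u & N & Hu & HsN)]; unfold env_del in *.
    + left. split; [apply in_fv_rec; auto|].
      destruct (Nat.eqb_spec s v); [contradiction | exact Hdel].
    + right. exists u, N. destruct (u =? v); [discriminate | auto].
  - simpl inst in Hs.
    rewrite fv_choice, flat_map_concat_map, map_map, <- flat_map_concat_map in Hs.
    apply in_flat_map in Hs as ([qm X] & Hb & Hs). simpl in Hs.
    destruct (IH _ Hb e Hs) as [[HsX He] | Hentry]; [left | right; exact Hentry].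
    split; [|exact He]. rewrite fv_choice. apply in_flat_map. eauto.
Qed.

End GlobalTypes.
Arguments env : clear implicits.

Section Correspondence.
Context {P M : Type}.
Notation gt := (gtype P M).
Variable G : gt.

(* [closes e c]: e maps each variable bound in G and free in the subterm c to
   the global type it currently stands for, namely an instantiation of its
   binder by an environment that itself closes that binder. *)
Inductive closes : env P M -> gt -> Prop :=
| closes_intro e c :
    subterm c G ->
    (forall v, In v (fv c) -> In v (bv G) -> e v <> None) ->
    (forall v N, e v = Some N -> forall s, In s (bv G) -> ~ In s (fv N)) ->
    (forall v N, e v = Some N -> exists e' B, closes e' (GRec v B) /\ inst e' (GRec v B) = N) ->
    closes e c.

Definition sem_equiv (T T' : gt) := forall x U, sem_CR T x U <-> sem_CR T' x U.

(* Up to [sem_equiv] only: after the epsilon-step mu r.B --> B of cat(G), the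
   instantiated state is the unfolding of the semantic state, not the state. *)
Definition matches (c T : gt) := exists e, closes e c /\ sem_equiv (inst e c) T.

Lemma closes_inv e c : closes e c ->
  subterm c G /\
  (forall v, In v (fv c) -> In v (bv G) -> e v <> None) /\
  (forall v N, e v = Some N -> forall s, In s (bv G) -> ~ In s (fv N)) /\
  (forall v N, e v = Some N -> exists e' B, closes e' (GRec v B) /\ inst e' (GRec v B) = N).
Proof. destruct 1; auto. Qed.

Lemma closes_subterm e c : closes e c -> subterm c G.
Proof. apply closes_inv. Qed.

Lemma matches_init : (forall r, In r (bv G) -> ~ In r (fv G)) -> matches G G.
Proof.
  intros Hbound. exists (fun _ => None). split.
  - constructor; [constructor | | discriminate | discriminate].
    intros v Hfv Hbv. exfalso. exact (Hbound v Hbv Hfv).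
  - rewrite inst_empty. intros x U. reflexivity.
Qed.

Lemma closes_branch e p bs q m X : closes e (GChoice p bs) -> In (q, m, X) bs -> closes e X.
Proof.
  intros Hc Hin. destruct (closes_inv _ _ Hc) as (Hsub & Hdom & Hclosed & Hentries).
  constructor; [| | exact Hclosed | exact Hentries].
  - eapply subterm_trans; [|exact Hsub]. econstructor; [exact Hin | constructor].
  - intros v Hv. apply Hdom. rewrite fv_choice. apply in_flat_map. exists (q, m, X). auto.
Qed.

Lemma closes_body e r B : closes e (GRec r B) -> closes (env_set e r (inst e (GRec r B))) B.
Proof.
  intros Hc. destruct (closes_inv _ _ Hc) as (Hsub & Hdom & Hclosed & Hentries).
  constructor.
  - eapply subterm_trans; [|exact Hsub]. do 2 constructor.
  - intros v Hv Hbv. unfold env_set. destruct (Nat.eqb_spec v r); [discriminate|].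
    apply Hdom; [apply in_fv_rec; auto | exact Hbv].
  - intros v N. unfold env_set. destruct (v =? r); [|apply Hclosed].
    intros [= <-] s Hs Hfv.
    destruct (inst_fv e (GRec r B) s Hfv) as [[Hfv' Hnone] | (u & N & Hu & HN)].
    + exact (Hdom s Hfv' Hs Hnone).
    + exact (Hclosed u N Hu s Hs HN).
  - intros v N. unfold env_set. destruct (Nat.eqb_spec v r) as [-> | _]; [|apply Hentries].
    intros [= <-]. eauto.
Qed.

Lemma inst_body e r B : closes e (GRec r B) ->
  inst (env_set e r (inst e (GRec r B))) B = subst r (inst e (GRec r B)) (inst (env_del e r) B).
Proof.
  intros Hc. rewrite <- env_set_del. symmetry. apply inst_subst.
  - unfold env_del. rewrite Nat.eqb_refl. reflexivity.
  - intros v N. unfold env_del. destruct (v =? r); [discriminate|].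
    destruct (closes_inv _ _ Hc) as (Hsub & _ & Hclosed & _). intros Hv.
    exact (Hclosed v N Hv r (subterm_rec_bv _ _ _ Hsub)).
Qed.

Lemma closes_var e v N : closes e (GVar v) -> e v = Some N ->
  exists e' B, closes e' (GRec v B) /\ inst e' (GRec v B) = N.
Proof. intros Hc. apply (closes_inv _ _ Hc). Qed.

Lemma cat_step_back r B : subterm (GVar r) G -> subterm (GRec r B) G ->
  cat_step G (GVar r) None (GRec r B).
Proof.
  intros Hvar Hrec. split; [exact Hvar | split; [exact Hrec|]].
  eapply catr_subterm; [exact Hrec | apply catr_back].
Qed.

Lemma cat_step_unfold r B : subterm (GRec r B) G -> cat_step G (GRec r B) None B.
Proof.
  intros Hrec. split; [exact Hrec | split].
  - eapply subterm_trans; [|exact Hrec]. do 2 constructor.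
  - eapply catr_subterm; [exact Hrec | apply catr_unfold].
Qed.

Lemma cat_step_choice p bs q m X : subterm (GChoice p bs) G -> In (q, m, X) bs ->
  cat_step G (GChoice p bs) (Some (p, q, m)) X.
Proof.
  intros Hch Hin. split; [exact Hch | split].
  - eapply subterm_trans; [|exact Hch]. econstructor; [exact Hin | constructor].
  - eapply catr_subterm; [exact Hch | apply catr_choice, Hin].
Qed.

Lemma matches_cat_step c T l c' : NoDup (bv G) -> matches c T -> cat_step G c l c' ->
  exists T', stutter_step (@sem_CR_step P M) T l T' /\ matches c' T'.
Proof.
  intros Hnd (e & Hc & Hequiv) (_ & _ & Hcat).
  destruct (catr_cases _ _ _ _ Hcat)
    as [(r & B & -> & -> & -> & Hsub)
       | [(r & B & -> & -> & ->) | (p & bs & q & m & -> & -> & Hin)]].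
  - exists T. split; [right; auto|].
    assert (Hbound : In r (bv G)) by exact (subterm_rec_bv _ _ _ Hsub).
    destruct (e r) as [N|] eqn:Her.
    + destruct (closes_var _ _ _ Hc Her) as (e' & B' & Hc' & Hinst).
      assert (B' = B) as ->
        by exact (rec_binder_unique _ _ _ _ Hnd (closes_subterm _ _ Hc') Hsub).
      exists e'. split; [exact Hc'|].
      rewrite Hinst. simpl in Hequiv. rewrite Her in Hequiv. exact Hequiv.
    + exfalso. destruct (closes_inv _ _ Hc) as (_ & Hdom & _).
      exact (Hdom r (or_introl eq_refl) Hbound Her).
  - exists T. split; [right; auto|].
    exists (env_set e r (inst e (GRec r B))). split; [exact (closes_body _ _ _ Hc)|].
    rewrite (inst_body _ _ _ Hc). intros x U. rewrite <- (Hequiv x U). symmetry.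
    exact (sem_CR_unfold r (inst (env_del e r) B) x U).
  - exists (inst e c'). split.
    + left. apply Hequiv. simpl. apply CR_choice.
      exact (in_map (fun b => (fst b, inst e (snd b))) _ (q, m, c') Hin).
    + exists e. split; [exact (closes_branch _ _ _ _ _ _ Hc Hin) | intros x U; reflexivity].
Qed.

Lemma closes_sem_step T0 x T' : sem_CR T0 x T' -> forall e c, closes e c -> inst e c = T0 ->
  exists c', weak_step (cat_step G) c (Some x) c' /\ matches c' T'.
Proof.
  induction 1 as [p bs q m X Hin | r B x T' _ IH]; intros e c Hc Hinst.
  - destruct c as [| v | v B | p' bs']; simpl in Hinst; try discriminate.
    + destruct (e v) as [N|] eqn:Hev; [subst N | discriminate].
      destruct (closes_var _ _ _ Hc Hev) as (e' & B & _ & Hinst'). discriminate.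
    + injection Hinst as -> Hbs. subst bs.
      apply in_map_iff in Hin as ([[q' m'] Y] & [= -> -> <-] & HinY).
      exists Y. split.
      * exists 0, (GChoice p bs'). split; [constructor|].
        exact (cat_step_choice _ _ _ _ _ (closes_subterm _ _ Hc) HinY).
      * exists e. split; [exact (closes_branch _ _ _ _ _ _ Hc HinY) | intros x U; reflexivity].
  - assert (Hrec : forall e v B0, closes e (GRec v B0) -> inst e (GRec v B0) = GRec r B ->
              exists c', weak_step (cat_step G) (GRec v B0) (Some x) c' /\ matches c' T').
    { intros e' v B0 Hc' Hinst'. pose proof Hinst' as Hinst''. simpl in Hinst''.
      injection Hinst'' as -> HB.
      destruct (IH (env_set e' r (inst e' (GRec r B0))) B0) as (c' & Hweak & Hm).
      - exact (closes_body _ _ _ Hc').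
      - rewrite (inst_body _ _ _ Hc'), Hinst', HB. reflexivity.
      - exists c'. split; [|exact Hm].
        eapply weak_step_silent; [|exact Hweak].
        exact (cat_step_unfold _ _ (closes_subterm _ _ Hc')). }
    destruct c as [| v | v B0 | p bs]; simpl in Hinst; try discriminate.
    + destruct (e v) as [N|] eqn:Hev; [subst N | discriminate].
      destruct (closes_var _ _ _ Hc Hev) as (e' & B0 & Hc' & Hinst').
      destruct (Hrec e' v B0 Hc' Hinst') as (c' & Hweak & Hm).
      exists c'. split; [|exact Hm]. eapply weak_step_silent; [|exact Hweak].
      exact (cat_step_back _ _ (closes_subterm _ _ Hc) (closes_subterm _ _ Hc')).
    + exact (Hrec e v B0 Hc Hinst).
Qed.

Lemma matches_sem_step c T x T' : matches c T -> sem_CR T x T' ->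
  exists c', weak_step (cat_step G) c (Some x) c' /\ matches c' T'.
Proof.
  intros (e & Hc & Hequiv) Hsem. apply Hequiv in Hsem.
  exact (closes_sem_step _ _ _ Hsem e c Hc eq_refl).
Qed.

End Correspondence.

Theorem proposition5p2 (P M : Type) (G : gtype P M) (HG : wf_gtype G) :
  forall w : word (interaction P M),
    lts_lang (@cat_step P M G) G w <-> lts_lang (@sem_CR_step P M) G w.
Proof.
  intros w. destruct HG as (_ & Hnodup & Hbound).
  pose proof (matches_init G Hbound) as Hinit.
  split; intros Hw.
  - apply lts_lang_unstutter. revert Hw.
    apply (lts_lang_sim _ _ (matches G)); [|exact Hinit].
    intros c T l c' Hm Hstep. exact (matches_cat_step G _ _ _ _ Hnodup Hm Hstep).
  - apply lts_lang_unsaturate. revert Hw.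
    apply (lts_lang_sim _ _ (fun T c => matches G c T)); [|exact Hinit].
    intros T c [x|] T' Hm Hstep; [|contradiction].
    exact (matches_sem_step G _ _ _ _ Hm Hstep).
Qed.
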